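(* Let $\mathbb{K}$ be a field of characteristic zero, let $p,q\in\mathbb{Z}^n_{\ge0}$ be nonzero vectors and let $\beta\in\mathbb{K}^n\setminus\{0\}$. Then the following are equivalent: (i) the derivations $\Delta^p_\beta$ and $\Delta^q_\beta$ of $\mathbb{K}[x_1,\ldots,x_n]$ generate a finite dimensional Lie algebra; (ii) $[\Delta^p_\beta,\Delta^q_\beta]=0$; (iii) $\langle\beta,p\rangle=\langle\beta,q\rangle$.
   Context: For $p\in\mathbb{Z}^n_{\ge0}$ and $\beta\in\mathbb{K}^n$, $\Delta^p_\beta:=x_1^{p_1}\cdots x_n^{p_n}\sum_{j=1}^n\beta_jx_j\partial_j$, where $\partial_j=\partial/\partial x_j$. $\langle\beta,u\rangle:=\sum_i\beta_iu_i$. The Lie bracket is the commutator of derivations. *)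

From HB Require Import structures.
From mathcomp Require Import all_boot all_order all_algebra.
From mathcomp Require Import mpoly.
Set Implicit Arguments. Unset Strict Implicit. Unset Printing Implicit Defensive.
Import Order.TTheory GRing.Theory.
Local Open Scope ring_scope.

(* Operators on K[x_1,...,x_n] (K-linear maps are represented as plain functions). *)
Definition op (K : fieldType) (n : nat) := {mpoly K[n]} -> {mpoly K[n]}.

Definition pairing (K : fieldType) (n : nat) (beta : 'rV[K]_n) (u : 'X_{1..n}) : K :=
  \sum_(i < n) beta 0 i * (u i)%:R.

Definition Delta (K : fieldType) (n : nat) (p : 'X_{1..n}) (beta : 'rV[K]_n) : op K n :=
  fun f => 'X_[p] * \sum_(j < n) (beta 0 j *: ('X_j * mderiv j f)).

Definition lie_bracket (K : fieldType) (n : nat) (D E : op K n) : op K n :=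
  fun f => D (E f) - E (D f).

Inductive lie_gen (K : fieldType) (n : nat) (D1 D2 : op K n) : op K n -> Prop :=
  | lg_gen1 : lie_gen D1 D2 D1
  | lg_gen2 : lie_gen D1 D2 D2
  | lg_zero : lie_gen D1 D2 (fun _ => 0)
  | lg_lin : forall (a : K) (D E : op K n), lie_gen D1 D2 D -> lie_gen D1 D2 E ->
      lie_gen D1 D2 (fun f => a *: D f + E f)
  | lg_br : forall D E : op K n, lie_gen D1 D2 D -> lie_gen D1 D2 E ->
      lie_gen D1 D2 (lie_bracket D E).

Definition fin_dim (K : fieldType) (n : nat) (L : op K n -> Prop) : Prop :=
  exists s : seq (op K n), forall D, L D ->
    exists c : 'I_(size s) -> K,
      D = (fun f => \sum_(i < size s) c i *: (nth (fun _ => 0) s i) f).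

(** Write [E_beta = sum_j beta_j x_j d/dx_j], so that [Delta^u_beta = x^u E_beta].
  [E_beta] is a derivation acting on the monomial [x^m] by the scalar
  [<beta, m>], and this gives [[Delta^u_beta, Delta^v_beta] =
  (<beta, v> - <beta, u>) Delta^(u+v)_beta]; testing on [x_j] with
  [beta_j <> 0] shows (ii) <-> (iii). Commuting generators span a Lie algebra
  of dimension at most two. Conversely, if [<beta, p> <> <beta, q>], brackets
  produce from any two exponents [u, v] with different pairings the exponent
  [u + v], together with one of [u, v] whose pairing differs from that of
  [u + v]; so the Lie algebra contains [Delta^u_beta] with [|u|] arbitrarily
  large, and [Delta^u_beta x_j] has degree [|u| + 1], which a finite span
  cannot bound. No hypothesis on the characteristic is needed. *)

From HB Require Import structures.
From mathcomp Require Import all_boot all_order all_algebra.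
From mathcomp Require Import mpoly.
From mathcomp Require Import ring.
From Stdlib Require Import FunctionalExtensionality.
Set Implicit Arguments. Unset Strict Implicit. Unset Printing Implicit Defensive.
Import Order.TTheory GRing.Theory.
Local Open Scope ring_scope.

Lemma linear_comb (R : pzRingType) (U V : lmodType R) (f : U -> V) :
  linear f -> forall a b x y, f (a *: x + b *: y) = a *: f x + b *: f y.
Proof. by move=> lin_f a b x y; rewrite lin_f (scalable_linear lin_f). Qed.

Section CommutingGenerators.
Variables (K : fieldType) (n : nat) (D1 D2 : op K n).
Hypotheses (lin1 : linear D1) (lin2 : linear D2).
Hypothesis D12_comm : lie_bracket D1 D2 = (fun _ => 0).

Lemma lie_gen_commuting_span D : lie_gen D1 D2 D ->
  exists a b, forall f, D f = a *: D1 f + b *: D2 f.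
Proof.
have comm f : D1 (D2 f) = D2 (D1 f).
  by apply/eqP; rewrite -subr_eq0; apply/eqP; exact: (congr1 (@^~ f) D12_comm).
elim=> [|||a G H _ [a1 [b1 GE]] _ [a2 [b2 HE]]|G H _ [a1 [b1 GE]] _ [a2 [b2 HE]]].
- by exists 1, 0 => f; rewrite scale1r scale0r addr0.
- by exists 0, 1 => f; rewrite scale1r scale0r add0r.
- by exists 0, 0 => f; rewrite !scale0r addr0.
- exists (a * a1 + a2), (a * b1 + b2) => f.
  by rewrite GE HE !scalerDl -!scalerA scalerDr addrACA.
- exists 0, 0 => f; rewrite !scale0r addr0 /lie_bracket GE HE !GE !HE.
  rewrite !(linear_comb lin1) !(linear_comb lin2) (comm f) -!mul_mpolyC.
  ring.
Qed.

Lemma fin_dim_lie_gen_commuting : fin_dim (lie_gen D1 D2).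
Proof.
exists [:: D1; D2] => D /lie_gen_commuting_span [a [b Dab]].
exists (fun i : 'I_2 => if val i == 0%N then a else b).
apply: functional_extensionality => f.
by rewrite Dab /= big_ord_recl big_ord_recl big_ord0 addr0.
Qed.

End CommutingGenerators.

Lemma fin_dim_msize_bounded (K : fieldType) (n : nat) (L : op K n -> Prop) :
  fin_dim L -> forall g, exists N, forall D, L D -> (msize (D g) <= N)%N.
Proof.
move=> [s span_s] g; exists (\max_(i < size s) msize (nth (fun=> 0%R) s i g))%N.
move=> D /span_s [c ->]; apply: leq_trans (msize_sum _ _ _) _.
apply/bigmax_leqP => i _; apply: leq_trans (msizeZ_le _ _) _.
exact: leq_bigmax.
Qed.

Section EulerOperator.
Variables (K : fieldType) (n : nat) (beta : 'rV[K]_n).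

Definition euler (f : {mpoly K[n]}) : {mpoly K[n]} :=
  \sum_(j < n) beta 0 j *: ('X_j * mderiv j f).

Lemma DeltaE p f : Delta p beta f = 'X_[p] * euler f.
Proof. by []. Qed.

Lemma euler_is_linear : linear euler.
Proof.
move=> a f g; rewrite /euler scaler_sumr -big_split /=; apply: eq_bigr => j _.
by rewrite linearP mulrDr scalerDr -scalerAr !scalerA mulrC.
Qed.

Lemma eulerM f g : euler (f * g) = euler f * g + f * euler g.
Proof.
rewrite /euler mulr_suml mulr_sumr -big_split /=; apply: eq_bigr => j _.
rewrite mderivM mulrDr scalerDr.
by congr (_ + _); [rewrite -scalerAl mulrA | rewrite -scalerAr mulrCA].
Qed.

Lemma euler_mpolyX m : euler 'X_[m] = pairing beta m *: 'X_[m].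
Proof.
rewrite /euler /pairing scaler_suml; apply: eq_bigr => j _.
rewrite mderivX -scalerAr -scalerA; congr (_ *: _).
have [-> | m_j_gt0] := posnP (m j); first by rewrite !scale0r.
by rewrite -mpolyXD addmC submK // lep1mP -lt0n.
Qed.

Lemma pairingD u v : pairing beta (u + v)%MM = pairing beta u + pairing beta v.
Proof.
rewrite /pairing -big_split /=; apply: eq_bigr => i _.
by rewrite mnmDE natrD mulrDr.
Qed.

Lemma pairing_mnm1 j : pairing beta U_(j)%MM = beta 0 j.
Proof.
rewrite /pairing (bigD1 j) //= big1 ?addr0; first by rewrite mnm1E eqxx mulr1.
by move=> i /negbTE neq_ij; rewrite mnm1E eq_sym neq_ij mulr0.
Qed.

Lemma Delta_is_linear p : linear (Delta p beta).
Proof. by move=> a f g; rewrite !DeltaE euler_is_linear mulrDr scalerAr. Qed.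

Lemma Delta_mpolyX p m : Delta p beta 'X_[m] = pairing beta m *: 'X_[p + m].
Proof. by rewrite DeltaE euler_mpolyX -scalerAr mpolyXD. Qed.

Lemma msize_Delta_mnm1 p j : beta 0 j != 0 ->
  msize (Delta p beta 'X_[U_(j)]) = (mdeg p).+2.
Proof.
by move=> beta_j; rewrite Delta_mpolyX pairing_mnm1 msizeZ // msizeX mdegD mdeg1 addn1.
Qed.

Lemma lie_bracket_Delta u v f :
  lie_bracket (Delta u beta) (Delta v beta) f =
  (pairing beta v - pairing beta u) *: Delta (u + v) beta f.
Proof.
rewrite /lie_bracket !DeltaE !eulerM !euler_mpolyX mpolyXD -!mul_mpolyC rmorphB /=.
ring.
Qed.

End EulerOperator.

Section TwoMonomialDerivations.
Variables (K : fieldType) (n : nat) (beta : 'rV[K]_n) (p q : 'X_{1..n}).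
Hypothesis beta_neq0 : beta != 0.

Local Notation L := (lie_gen (Delta p beta) (Delta q beta)).

Lemma lie_bracket_Delta_eq0 :
  lie_bracket (Delta p beta) (Delta q beta) = (fun _ => 0) <->
  pairing beta p = pairing beta q.
Proof.
split=> [br0 | pq_eq]; last first.
  apply: functional_extensionality => f.
  by rewrite lie_bracket_Delta pq_eq subrr scale0r.
have [j beta_j] := rV0Pn _ beta_neq0.
have /eqP := congr1 (@^~ 'X_[U_(j)]) br0; rewrite /= lie_bracket_Delta scaler_eq0.
by rewrite -msize_poly_eq0 msize_Delta_mnm1 // orbF subr_eq0 => /eqP ->.
Qed.

Lemma lie_gen_Delta_add u v : L (Delta u beta) -> L (Delta v beta) ->
  pairing beta u != pairing beta v -> L (Delta (u + v) beta).
Proof.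
move=> Lu Lv neq_uv; have c_neq0 : pairing beta v - pairing beta u != 0.
  by rewrite subr_eq0 eq_sym.
have -> : Delta (u + v) beta = fun f =>
    (pairing beta v - pairing beta u)^-1 *:
      lie_bracket (Delta u beta) (Delta v beta) f + 0.
  apply: functional_extensionality => f.
  by rewrite addr0 lie_bracket_Delta scalerA mulVf // scale1r.
by apply: lg_lin; [apply: lg_br | apply: lg_zero].
Qed.

Hypotheses (p_neq0 : p != 0%MM) (q_neq0 : q != 0%MM).

Lemma lie_gen_Delta_unbounded : pairing beta p != pairing beta q ->
  forall k, exists u, L (Delta u beta) /\ (k < mdeg u)%N.
Proof.
move=> neq_pq k.
suff [u [v [Lu _ _ _ lt_k]]] : exists u v, [/\ L (Delta u beta), L (Delta v beta),
    pairing beta u != pairing beta v, v != 0%MM & (k < mdeg u)%N].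
  by exists u.
elim: k => [|k [u [v [Lu Lv neq_uv v_neq0 lt_k]]]].
  by exists p, q; split; rewrite ?lt0n ?mdeg_eq0 //; constructor.
have Luv := lie_gen_Delta_add Lu Lv neq_uv.
have lt_k1 : (k.+1 < mdeg (u + v))%N.
  by rewrite mdegD -addn1 leq_add // lt0n mdeg_eq0.
have [v0 | v_ne0] := eqVneq (pairing beta v) 0.
- exists (u + v)%MM, v; split=> //.
  by rewrite pairingD v0 addr0 -v0.
- exists (u + v)%MM, u; split=> //.
  + by rewrite pairingD -subr_eq0 addrAC subrr add0r.
  + by rewrite -mdeg_eq0 -lt0n (leq_ltn_trans _ lt_k).
Qed.

Lemma fin_dim_lie_gen_Delta : fin_dim L -> pairing beta p = pairing beta q.
Proof.
move=> fdL; apply/eqP/negP => /negP neq_pq.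
have [j beta_j] := rV0Pn _ beta_neq0.
have [N boundN] := fin_dim_msize_bounded fdL 'X_[U_(j)].
have [u [Lu lt_N]] := lie_gen_Delta_unbounded neq_pq N.
have := boundN _ Lu; rewrite msize_Delta_mnm1 //.
by rewrite ltnNge (ltnW (leq_trans lt_N _)).
Qed.

End TwoMonomialDerivations.

Theorem lemma4 (K : fieldType) (n : nat) (charK : [pchar K] =i pred0)
  (p q : 'X_{1..n}) (hp : p != 0%MM) (hq : q != 0%MM)
  (beta : 'rV[K]_n) (hbeta : beta != 0) :
  (fin_dim (lie_gen (Delta p beta) (Delta q beta)) <->
     lie_bracket (Delta p beta) (Delta q beta) = (fun _ => 0)) /\
  (lie_bracket (Delta p beta) (Delta q beta) = (fun _ => 0) <->
     pairing beta p = pairing beta q).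
Proof.
have bracket_iff := lie_bracket_Delta_eq0 p q hbeta.
split=> //; split=> [fdL | br0].
  exact/bracket_iff/(fin_dim_lie_gen_Delta hbeta hp hq).
exact: fin_dim_lie_gen_commuting (Delta_is_linear _ _) (Delta_is_linear _ _) br0.
Qed.
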